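(* Let $V$ be an $n$-dimensional complex vector space with complete flag $F_\bullet$, let $U\subseteq V$ be an $r$-dimensional subspace lying in the Schubert variety $\Omega_I(F_\bullet)\subseteq\mathrm{Gr}(r,V)$ for some $r$-element $I\subseteq[n]$, and let $W=V/U$. (i) If $X\subseteq U$ is a subspace of dimension $x$ with $X\in\Omega_P(F_\bullet U)\subseteq\mathrm{Gr}(x,U)$ for an $x$-element $P\subseteq[r]$, then $X\in\Omega_{I_P}(F_\bullet)\subseteq\mathrm{Gr}(x,V)$. (ii) If $Y\subseteq W$ is a subspace of dimension $y$ with $Y\in\Omega_P(F_\bullet W)\subseteq\mathrm{Gr}(y,W)$ for a $y$-element $P\subseteq[n-r]$, and $Y=Z/U$ with $U\subseteq Z\subseteq V$, then $Z\in\Omega_{I^+_P}(F_\bullet)\subseteq\mathrm{Gr}(r+y,V)$.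
   Context: $[n]=\{1,\dots,n\}$. A complete flag in an $N$-dimensional space $E$ is $0=F_0\subset F_1\subset\cdots\subset F_N=E$ with $\dim F_i=i$. For $J=\{j_1<\dots<j_k\}\subseteq[N]$, $\Omega_J(F_\bullet)=\{L\in\mathrm{Gr}(k,E):\dim(L\cap F_{j_a})\ge a,\ 1\le a\le k\}$; the Schubert cell $\Omega^\circ_J(F_\bullet)$ is the set of $k$-dimensional $L$ with $\{i\in[N]: L\cap F_i\ne L\cap F_{i-1}\}=J$. Induced flags: let $H=\{h_1<\dots<h_r\}$ be the set with $U\in\Omega^\circ_H(F_\bullet)$ and $H^c=[n]\setminus H=\{h^c_1<\dots<h^c_{n-r}\}$; then $F_kU=F_{h_k}\cap U$ ($1\le k\le r$) and $F_kW=(U+F_{h^c_k})/U$ ($1\le k\le n-r$). For $I=\{i_1<\dots<i_r\}$ and $P=\{p_1<\dots<p_x\}\subseteq[r]$, $I_P=\{i_{p_1}<\dots<i_{p_x}\}$; for $P\subseteq[n-r]$, $I^+_P=I\cup\{i^c_p:p\in P\}$ where $[n]\setminus I=\{i^c_1<\dots<i^c_{n-r}\}$. *)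

From HB Require Import structures.
From mathcomp Require Import all_boot all_order all_algebra.
From mathcomp Require Export complex.
From mathcomp Require Export reals.
Export all_boot all_order all_algebra.

Set Implicit Arguments.
Unset Strict Implicit.
Unset Printing Implicit Defensive.

(* Index sets J ⊆ [N] = {1,...,N} are encoded as strictly increasing
   sequences of naturals, 1-based as in the paper: j_a = nth 0 J (a-1). *)
Definition index_set (N : nat) (J : seq nat) : bool :=
  sorted ltn J && all (fun j => (0 < j <= N)%N) J.

Definition compl_idx (N : nat) (J : seq nat) : seq nat :=
  [seq i <- iota 1 N | i \notin J].

Section Flags.
Variables (K : fieldType) (vT : vectType K).

Definition complete_flag (E : {vspace vT}) (F : nat -> {vspace vT}) : Prop :=
  F 0%N = 0%VS /\
  (forall i, (i <= \dim E)%N -> (F i <= E)%VS /\ \dim (F i) = i) /\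
  (forall i, (i < \dim E)%N -> (F i <= F i.+1)%VS) /\
  F (\dim E) = E.

Definition schubert_variety (E : {vspace vT}) (F : nat -> {vspace vT})
    (J : seq nat) (L : {vspace vT}) : Prop :=
  (L <= E)%VS /\ \dim L = size J /\
  (forall a, (a < size J)%N -> (a.+1 <= \dim (L :&: F (nth 0%N J a)))%N).

Definition jump_set (N : nat) (F : nat -> {vspace vT}) (L : {vspace vT})
    : seq nat :=
  [seq i <- iota 1 N | (L :&: F i != L :&: F i.-1)%VS].

Definition schubert_cell (E : {vspace vT}) (F : nat -> {vspace vT})
    (J : seq nat) (L : {vspace vT}) : Prop :=
  (L <= E)%VS /\ \dim L = size J /\ jump_set (\dim E) F L = J.

Definition sub_flag (N : nat) (F : nat -> {vspace vT}) (U : {vspace vT})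
    (k : nat) : {vspace vT} :=
  if k == 0%N then 0%VS else (F (nth 0%N (jump_set N F U) k.-1) :&: U)%VS.

End Flags.

(* induced flag on W = V/U, where the quotient is given by a linear
   surjection pi : V -> W with kernel U:
   F_k W = pi(U + F_{h^c_k}), H^c = [N] \ H. *)
Definition quot_flag (K : fieldType) (vT wT : vectType K) (N : nat)
    (F : nat -> {vspace vT}) (U : {vspace vT}) (pi : 'Hom(vT, wT))
    (k : nat) : {vspace wT} :=
  if k == 0%N then 0%VS
  else (pi @: (U + F (nth 0%N (compl_idx N (jump_set N F U)) k.-1)))%VS.

Definition idx_sub (I P : seq nat) : seq nat :=
  [seq nth 0%N I p.-1 | p <- P].

Definition idx_plus (N : nat) (I P : seq nat) : seq nat :=
  sort leq (I ++ [seq nth 0%N (compl_idx N I) p.-1 | p <- P]).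

(* Both Schubert conditions are used in counting form: for J sorted, L lies in
   Omega_J(F) iff dim (L :&: F j) >= #{a | j_a <= j} for every j, and for any L
   the number of jumps of L up to j is exactly dim (L :&: F j).
   (i) Applied to U, the second fact gives h_p <= i_p, so F_p U = F_{h_p} :&: U
   is contained in F_{i_p}.
   (ii) As ker pi = U <= Z, dim (Z :&: F j) = dim (U :&: F j) + dim (Y :&: pi F_j),
   and pi F_j = pi (U + F_j) contains F_k W for k the number of non-jumps of U up
   to j.  Counting the elements <= j of I, [n] \ I, H and [n] \ H then bounds
   #{elements of I^+_P that are <= j} by dim (Z :&: F j). *)

From mathcomp Require Import zify.
Import GRing.Theory.

Set Implicit Arguments.
Unset Strict Implicit.
Unset Printing Implicit Defensive.

Definition count_le (s : seq nat) (j : nat) : nat := count (leq^~ j) s.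

Lemma count_le_nth s a j : sorted leq s -> a < size s ->
  (a < count_le s j) = (nth 0 s a <= j).
Proof.
elim: s a => // x s IHs a /= x_path; rewrite /count_le /= -/(count_le s j).
have x_le := allP (order_path_min leq_trans x_path).
have [x_le_j | j_lt_x] := leqP x j.
  by case: a => [|a] //=; rewrite ltnS => /(IHs _ (path_sorted x_path)).
have -> : count_le s j = 0.
  apply/eqP; rewrite -leqn0 leqNgt -has_count; apply/hasPn => y /x_le.
  by rewrite -ltnNge; apply: leq_trans.
case: a => [|a] a_lt /=; first by rewrite (ltn_geF j_lt_x).
rewrite ltnS in a_lt; have x_le_nth := x_le _ (mem_nth 0 a_lt).
by rewrite (ltn_geF (leq_trans j_lt_x x_le_nth)).
Qed.

Lemma nth_le_of_count_le s a j : sorted leq s -> a < count_le s j -> nth 0 s a <= j.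
Proof.
move=> s_sorted a_lt; rewrite -count_le_nth //.
exact: leq_trans a_lt (count_size _ _).
Qed.

Lemma count_le_filterC s (p : pred nat) j :
  count_le (filter p s) j + count_le (filter (predC p) s) j = count_le s j.
Proof.
rewrite /count_le -[in RHS]size_filter -(count_predC p) !count_filter.
by congr (_ + _); apply: eq_count => x /=; rewrite andbC.
Qed.

Lemma count_le_filter_iota (q : pred nat) n j : j <= n ->
  count_le (filter q (iota 1 n)) j = count q (iota 1 j).
Proof.
move=> le_jn; rewrite /count_le count_filter -(subnKC le_jn) iotaD count_cat.
rewrite (@eq_in_count _ _ q) => [|i]; last first.
  by rewrite mem_iota /= add1n ltnS => /andP[_ ->].
rewrite (@eq_in_count _ _ pred0 (iota j.+1 _)) => [|i]; last first.
  by rewrite mem_iota /=; lia.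
by rewrite count_pred0 addn0.
Qed.

Lemma count_le_iota n j : j <= n -> count_le (iota 1 n) j = j.
Proof.
move=> le_jn; rewrite -[iota 1 n]filter_predT count_le_filter_iota //.
by rewrite count_predT size_iota.
Qed.

Lemma count_le_size s n : all (leq^~ n) s -> count_le s n = size s.
Proof.
move=> s_le; rewrite /count_le (eq_in_count (a2 := predT)) ?count_predT //.
exact/allP.
Qed.

Lemma count_le_uniq_sub s a b : uniq s -> a <= b ->
  count_le s b <= count_le s a + (b - a).
Proof.
move=> s_uniq le_ab; rewrite /count_le.
have -> : count (leq^~ b) s = count (leq^~ a) s + count (fun x => a < x <= b) s.
  by elim: s {s_uniq} => //= x s ->; case: (leqP x a); case: (leqP x b); lia.
rewrite leq_add2l -size_filter -(size_iota a.+1 (b - a)).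
apply: uniq_leq_size; first exact: filter_uniq.
by move=> x; rewrite mem_filter mem_iota => /andP[]; lia.
Qed.

Lemma index_set_sorted N I : index_set N I -> sorted leq I.
Proof. by case/andP=> /(sub_sorted ltnW). Qed.

Lemma index_set_le N I : index_set N I -> all (leq^~ N) I.
Proof. by case/andP=> _ /allP I_le; apply/allP=> i /I_le /andP[]. Qed.

Lemma nth_index_set_le N I i : index_set N I -> nth 0 I i <= N.
Proof.
move=> /index_set_le I_le.
by have [/(mem_nth 0)/(allP I_le) | /(nth_default 0)->] := ltnP i (size I).
Qed.

Lemma index_set_filter_iota N (q : pred nat) : index_set N (filter q (iota 1 N)).
Proof.
apply/andP; split; first exact/sorted_filter/iota_ltn_sorted/ltn_trans.
by apply/allP=> i; rewrite mem_filter mem_iota => /andP[_]; lia.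
Qed.

Lemma index_set_compl_idx N I : index_set N (compl_idx N I).
Proof. exact: index_set_filter_iota. Qed.

Lemma perm_index_set N I : index_set N I -> perm_eq I [seq i <- iota 1 N | i \in I].
Proof.
case/andP=> I_sorted /allP I_range; apply: uniq_perm.
- exact: sorted_uniq ltn_trans ltnn _ I_sorted.
- exact/filter_uniq/iota_uniq.
move=> i; rewrite mem_filter mem_iota andbC.
by have [/I_range|] := boolP (i \in I); rewrite ?andbF ?andbT // add1n ltnS => ->.
Qed.

Lemma count_le_compl_idx N I j : index_set N I -> j <= N ->
  count_le I j + count_le (compl_idx N I) j = j.
Proof.
move=> I_index le_jN; rewrite /count_le (permP (perm_index_set I_index)).
by rewrite -[RHS](count_le_iota le_jN) -(count_le_filterC _ (fun i => i \in I)).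
Qed.

Lemma size_compl_idx N I : index_set N I -> size (compl_idx N I) = N - size I.
Proof.
move=> I_index; have := count_le_compl_idx I_index (leqnn N).
rewrite !count_le_size ?(index_set_le I_index) //; first lia.
exact: index_set_le (index_set_compl_idx N I).
Qed.

Lemma count_le_idx_plus N I P j : index_set N I -> index_set (N - size I) P ->
  count_le (idx_plus N I P) j = count_le I j + count_le P (count_le (compl_idx N I) j).
Proof.
move=> I_index /andP[_ /allP P_range].
rewrite /idx_plus {1}/count_le (permP (permEl (perm_sort _ _))) count_cat count_map.
congr (_ + _); apply: eq_in_count => p /P_range /andP[p_gt0 p_le] /=.
rewrite -count_le_nth ?prednK //; last by rewrite size_compl_idx // prednK.
exact/index_set_sorted/index_set_compl_idx.
Qed.

Section Kernel.
Variables (K : fieldType) (vT wT : vectType K) (f : 'Hom(vT, wT)).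

Lemma limg_addv_ker (U A : {vspace vT}) : (U <= lker f)%VS ->
  (f @: (U + A) = f @: A)%VS.
Proof. by rewrite lkerE limgD => /eqP->; rewrite add0v. Qed.

Lemma limg_capv_ker (Z A : {vspace vT}) : (lker f <= Z)%VS ->
  (f @: (Z :&: A) = f @: Z :&: f @: A)%VS.
Proof.
move=> ker_Z; apply/eqP; rewrite eqEsubv subv_cap !limgS ?capvSl ?capvSr //=.
apply/subvP=> _ /memv_capP[/memv_imgP[z z_Z ->] /memv_imgP[x x_A fzx]].
suff x_Z : x \in Z by rewrite fzx memv_img // memv_cap x_Z.
have zx_ker : (z - x)%R \in lker f by rewrite memv_ker linearB /= fzx subrr.
by rewrite -(subKr z x) memvB // (subvP ker_Z).
Qed.

Lemma dim_capv_ker (Z A : {vspace vT}) : (lker f <= Z)%VS ->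
  \dim (Z :&: A) = \dim (lker f :&: A) + \dim (f @: Z :&: f @: A).
Proof.
move=> ker_Z; rewrite -limg_capv_ker // -(limg_ker_dim f (Z :&: A)).
by rewrite capvC capvA (capv_idPl ker_Z).
Qed.

End Kernel.

Section CompleteFlag.
Variables (K : fieldType) (vT wT : vectType K) (n : nat) (F : nat -> {vspace vT}).
Hypotheses (dimV : \dim {: vT} = n) (F_flag : complete_flag fullv F).

Lemma dim_flag j : j <= n -> \dim (F j) = j.
Proof. by case: F_flag => _ [F_dim _] le_jn; case: (F_dim j); rewrite ?dimV. Qed.

Lemma flagS i j : i <= j -> j <= n -> (F i <= F j)%VS.
Proof.
elim: j => [|j IHj]; first by rewrite leqn0 => /eqP->.
rewrite leq_eqVlt => /predU1P[-> // | /IHj le_Fi lt_jn].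
case: F_flag => _ [_ [F_step _]].
by apply: subv_trans (le_Fi (ltnW lt_jn)) (F_step _ _); rewrite dimV.
Qed.

Lemma dim_cap_flagS (L : {vspace vT}) j : j < n ->
  \dim (L :&: F j.+1) = \dim (L :&: F j) + (L :&: F j.+1 != L :&: F j)%VS.
Proof.
move=> lt_jn; have le_Fj := flagS (leqnSn j) lt_jn.
have le_capj : (L :&: F j <= L :&: F j.+1)%VS by apply: capvS.
have [-> | ne_cap] /= := eqVneq; first by rewrite addn0.
have : \dim (L :&: F j.+1) <= \dim (L :&: F j) + 1.
  have := dimv_sum_cap (L :&: F j.+1) (F j).
  have : \dim (L :&: F j.+1 + F j) <= j.+1.
    by rewrite -[leqRHS](dim_flag lt_jn); apply: dimvS; rewrite subv_add capvSr.
  have : \dim (L :&: F j.+1 :&: F j) <= \dim (L :&: F j).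
    by apply/dimvS/capvS; rewrite ?capvSl.
  rewrite (dim_flag (ltnW lt_jn)); lia.
have : \dim (L :&: F j) < \dim (L :&: F j.+1).
  by rewrite ltnNge; apply: contra ne_cap => le_dim; rewrite eq_sym eqEdim le_capj.
lia.
Qed.

Lemma count_le_jump_set (L : {vspace vT}) j : j <= n ->
  count_le (jump_set n F L) j = \dim (L :&: F j).
Proof.
move=> le_jn; rewrite count_le_filter_iota //.
elim: j le_jn => [_ | j IHj lt_jn]; first by case: F_flag => -> _; rewrite capv0 dimv0.
rewrite dim_cap_flagS // -IHj ?(ltnW lt_jn) //.
by rewrite -[X in iota _ X]addn1 iotaD count_cat /= addn0.
Qed.

Lemma index_set_jump_set (L : {vspace vT}) : index_set n (jump_set n F L).
Proof. exact: index_set_filter_iota. Qed.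

Lemma schubert_count_le J (L : {vspace vT}) j : sorted leq J ->
  schubert_variety fullv F J L -> j <= n -> count_le J j <= \dim (L :&: F j).
Proof.
move=> J_sorted [_ [_ L_J]] le_jn.
have [-> // | c_gt0] := posnP (count_le J j).
have a_lt : (count_le J j).-1 < count_le J j by rewrite prednK.
rewrite -(prednK c_gt0); apply: leq_trans (L_J _ (leq_trans a_lt (count_size _ _))) _.
apply/dimvS/capvS => //; exact: flagS (nth_le_of_count_le J_sorted a_lt) le_jn.
Qed.

Lemma count_le_schubert J (L : {vspace vT}) : sorted leq J -> all (leq^~ n) J ->
  \dim L = size J -> (forall j, j <= n -> count_le J j <= \dim (L :&: F j)) ->
  schubert_variety fullv F J L.
Proof.
move=> J_sorted J_le dimL L_count; split; [exact: subvf | split=> // a a_lt].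
have j_le := allP J_le _ (mem_nth 0 a_lt).
by apply: leq_trans (L_count _ j_le); rewrite count_le_nth.
Qed.

Lemma nth_jump_set_le I (U : {vspace vT}) p : index_set n I ->
  schubert_variety fullv F I U -> p < size I ->
  nth 0 (jump_set n F U) p <= nth 0 I p.
Proof.
move=> I_index [_ [_ U_I]] p_lt.
apply: nth_le_of_count_le; first exact/index_set_sorted/index_set_jump_set.
by rewrite count_le_jump_set ?U_I ?(nth_index_set_le _ I_index).
Qed.

Lemma schubert_sub_flag I (U : {vspace vT}) P X : index_set n I ->
  schubert_variety fullv F I U -> index_set (size I) P ->
  schubert_variety U (sub_flag n F U) P X -> schubert_variety fullv F (idx_sub I P) X.
Proof.
move=> I_index U_I /andP[_ /allP P_range] [_ [dimX X_P]].
split; [exact: subvf | rewrite size_map; split=> // a a_lt].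
rewrite (nth_map 0) //; set p := nth 0 P a.
have /andP[p_gt0 p_le] := P_range _ (mem_nth 0 a_lt).
apply: leq_trans (X_P a a_lt) _; rewrite /sub_flag -/p gtn_eqF //.
apply/dimvS/capvS => //; apply: subv_trans (capvSl _ _) (flagS _ _).
  by apply: nth_jump_set_le; rewrite ?prednK.
exact: nth_index_set_le I_index.
Qed.

Lemma quot_flag_count_le m (U : {vspace vT}) (pi : 'Hom(vT, wT)) P Y j :
  index_set m P -> schubert_variety fullv (quot_flag n F U pi) P Y -> j <= n ->
  count_le P (count_le (compl_idx n (jump_set n F U)) j)
    <= \dim (Y :&: pi @: (U + F j)).
Proof.
move=> /andP[/(sub_sorted ltnW) P_sorted /allP P_range] [_ [_ Y_P]] le_jn.
set hc := compl_idx n _; set c := count_le P _.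
have [-> // | c_gt0] := posnP c.
have a_lt : c.-1 < c by rewrite prednK.
have p_lt : c.-1 < size P := leq_trans a_lt (count_size _ _).
set p := nth 0 P c.-1.
have /andP[p_gt0 _] := P_range _ (mem_nth 0 p_lt).
have hc_le : nth 0 hc p.-1 <= j.
  apply: nth_le_of_count_le; first exact/index_set_sorted/index_set_compl_idx.
  by rewrite prednK //; apply: nth_le_of_count_le.
rewrite -(prednK c_gt0); apply: leq_trans (Y_P _ p_lt) _.
rewrite /quot_flag -/p gtn_eqF //; apply/dimvS/capvS => //.
exact/limgS/addvS/flagS.
Qed.

Lemma schubert_quot_flag I (U : {vspace vT}) (pi : 'Hom(vT, wT)) P Y Z :
  index_set n I -> schubert_variety fullv F I U -> lker pi = U ->
  index_set (n - size I) P -> schubert_variety fullv (quot_flag n F U pi) P Y ->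
  (U <= Z)%VS -> Y = (pi @: Z)%VS -> schubert_variety fullv F (idx_plus n I P) Z.
Proof.
move=> I_index U_I ker_pi P_index Y_P U_Z Y_def.
have [[_ [dimU _]] [_ [dimY _]]] := (U_I, Y_P).
have ker_Z : (lker pi <= Z)%VS by rewrite ker_pi.
apply: count_le_schubert.
- exact/sort_sorted/leq_total.
- apply/allP=> i; rewrite mem_sort mem_cat => /orP[/(allP (index_set_le I_index)) // |].
  by case/mapP=> p _ ->; apply: nth_index_set_le (index_set_compl_idx n I).
- rewrite size_sort size_cat size_map -dimU -dimY Y_def -(limg_ker_dim pi Z) ker_pi.
  by rewrite (capv_idPr U_Z).
move=> j le_jn; rewrite count_le_idx_plus // (dim_capv_ker (F j) ker_Z) ker_pi -Y_def.
have I_le_U := schubert_count_le (index_set_sorted I_index) U_I le_jn.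
have I_compl := count_le_compl_idx I_index le_jn.
have H_compl := count_le_compl_idx (index_set_jump_set U) le_jn.
rewrite count_le_jump_set // in H_compl.
have := quot_flag_count_le P_index Y_P le_jn; rewrite limg_addv_ker ?ker_pi //.
set cH := count_le (compl_idx n _) j; set cI := count_le (compl_idx n I) j.
have le_cH_cI : cH <= cI by lia.
have P_uniq : uniq P by case/andP: P_index => /(sorted_uniq ltn_trans ltnn).
have := count_le_uniq_sub P_uniq le_cH_cI; lia.
Qed.

End CompleteFlag.

Theorem lemma2 (R : realType) (n r : nat) (vT wT : vectType R[i])
    (F : nat -> {vspace vT}) (I : seq nat) (U : {vspace vT})
    (pi : 'Hom(vT, wT)) :
  \dim {: vT} = n ->
  complete_flag fullv F ->
  index_set n I -> size I = r ->
  schubert_variety fullv F I U ->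
  lker pi = U -> limg pi = fullv ->
  (forall (x : nat) (P : seq nat) (X : {vspace vT}),
      index_set r P -> size P = x ->
      schubert_variety U (sub_flag n F U) P X ->
      schubert_variety fullv F (idx_sub I P) X)
  /\
  (forall (y : nat) (P : seq nat) (Y : {vspace wT}) (Z : {vspace vT}),
      index_set (n - r) P -> size P = y ->
      schubert_variety fullv (quot_flag n F U pi) P Y ->
      (U <= Z)%VS -> Y = (pi @: Z)%VS ->
      schubert_variety fullv F (idx_plus n I P) Z).
Proof.
move=> dimV F_flag I_index <- U_I ker_pi _; split=> [x P X P_index _ | y P Y Z P_index _].
  exact: schubert_sub_flag.
exact: schubert_quot_flag.
Qed.
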